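(* Let $k\ge 0$ be an integer and let $T$ be the tree on $3k+4$ vertices obtained by taking $k+1$ disjoint copies of the star $K_{1,3}$ and identifying one leaf from each copy into a single vertex. Then $Z(T)=k+2$ and $Z_k(T)=k+1$.
   Context: Filling rule: if a filled vertex has exactly one unfilled neighbor (and any number of filled neighbors), that neighbor becomes filled; ''applying the filling rule in a subgraph $H$'' means applying it with neighborhoods taken in $H$. The $Z_q$-Game on $G$ ($q\ge 0$ an integer): initially all vertices are unfilled; a player repeatedly performs one of the following operations until all vertices are filled: (1) for one token, change any vertex from unfilled to filled; (2) at no cost, apply the filling rule in $G$; (3) if $F$ is the current set of filled vertices and $U_1,\dots,U_k$ are the vertex sets of the connected components of $G[V(G)\setminus F]$ with $k\ge q+1$, the player announces a selection of at least $q+1$ of the $U_i$ to an oracle (an adversary), the oracle returns a nonempty subset $\{U_{i_1},\dots,U_{i_\ell}\}$ of the selected components, and the player may at no cost apply the filling rule in $G[F\cup U_{i_1}\cup\cdots\cup U_{i_\ell}]$. $Z_q(G)$ is the minimum number of tokens with which the player can guarantee that all vertices become filled, regardless of the oracle's responses. The $Z$-Game is the same game with only operations (1) and (2) allowed, and $Z(G)$ (the zero forcing number) is the minimum number of tokens needed there to fill all vertices. *)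

From mathcomp Require Import all_boot.
Set Implicit Arguments.
Unset Strict Implicit.
Unset Printing Implicit Defensive.

(* A (simple) graph is given by a finite vertex type T and an adjacency
   relation e : rel T (symmetric and irreflexive for the graphs we use). *)

(* One application of the filling rule in the induced subgraph G[H]
   (H must contain the filled set F): the filled vertex u has v as its
   unique unfilled neighbour within H, and v becomes filled. *)
Definition fill_step (T : finType) (e : rel T) (H F : {set T}) (u v : T) : Prop :=
  [/\ u \in F, v \in H, v \notin F, e u v &
      forall w, w \in H -> e u w -> w \notin F -> w = v].

Definition unfilled_rel (T : finType) (e : rel T) (F : {set T}) : rel T :=
  [rel x y | [&& e x y, x \notin F & y \notin F]].

Definition is_component (T : finType) (e : rel T) (F U : {set T}) : Prop :=
  exists2 x, x \notin F & U = [set y | connect (unfilled_rel e F) x y].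

(* zq_win e oracle q F t : starting from the filled set F, the player can
   guarantee that all vertices become filled using at most t further tokens,
   whatever the oracle answers.  With oracle = false only operations (1) and
   (2) are allowed (the Z-Game); with oracle = true operation (3) with
   parameter q is also allowed (the Z_q-Game). *)
Inductive zq_win (T : finType) (e : rel T) (oracle : bool) (q : nat) :
    {set T} -> nat -> Prop :=
| zq_done (F : {set T}) (t : nat) : F = [set: T] -> zq_win e oracle q F t
| zq_token (F : {set T}) (t : nat) (v : T) : v \notin F -> zq_win e oracle q (v |: F) t ->
    zq_win e oracle q F t.+1
| zq_fill (F : {set T}) (t : nat) (u v : T) : fill_step e [set: T] F u v ->
    zq_win e oracle q (v |: F) t -> zq_win e oracle q F t
| zq_oracle (F : {set T}) (t : nat) (S : {set {set T}}) :
    oracle ->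
    (forall U, U \in S -> is_component e F U) ->
    q.+1 <= #|S| ->
    (forall S' : {set {set T}}, S' \subset S -> S' != set0 ->
       exists u v, fill_step e (F :|: \bigcup_(U in S') U) F u v /\
                   zq_win e oracle q (v |: F) t) ->
    zq_win e oracle q F t.

Definition is_min_tokens (T : finType) (e : rel T) (oracle : bool) (q m : nat) : Prop :=
  zq_win e oracle q set0 m /\ (forall t, zq_win e oracle q set0 t -> m <= t).

Definition is_Z (T : finType) (e : rel T) (m : nat) : Prop :=
  is_min_tokens e false 0 m.

Definition is_Zq (T : finType) (e : rel T) (q m : nat) : Prop :=
  is_min_tokens e true q m.

(* The tree of the statement: vertices are None (the identified leaf) and
   Some (i, j) for i < k+1, j < 3, where Some (i, 0) is the centre of the
   i-th copy of K_{1,3} and Some (i, 1), Some (i, 2) its two other leaves. *)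
Definition star_vertex (k : nat) : finType := option ('I_k.+1 * 'I_3)%type.

Definition star_tree (k : nat) : rel (star_vertex k) :=
  fun x y =>
    match x, y with
    | None, None => false
    | None, Some (_, j) => val j == 0
    | Some (_, j), None => val j == 0
    | Some (i, j), Some (i', j') =>
        (i == i') && (((val j == 0) && (val j' != 0)) || ((val j != 0) && (val j' == 0)))
    end.
Arguments star_tree k : clear implicits.

From mathcomp Require Import all_boot zify.

(* Call a star open when neither of its two outer leaves is filled.  A token
   closes at most one star, and a force never closes one: the centre can force
   an outer leaf only once the other one is filled.
   In the Z-game, while the hub is unfilled and no star has both outer leaves
   filled, neither the hub nor an outer leaf can be forced; leaving this
   initial situation therefore takes a token on the hub or on a second leaf,
   which closes no star, so Z >= (k + 1) + 1.
   In the Z_k-game a star can also be closed by an oracle answer H, when a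
   filled centre forces one outer leaf while the other lies outside H.  Among
   the k + 1 components offered, the oracle can always return one or two for
   which this cannot happen, except when every star is open and some centre
   is filled; that exception is paid for once, so Z_k >= k + 1.
   Conversely, tokens on one outer leaf of every star (and, in the Z-game, on
   a second leaf of one star) force everything; in the Z_k-game the k + 1
   isolated remaining leaves are offered to the oracle, and any returned one
   is forced by its centre inside the induced subgraph, which avoids the hub. *)

Set Implicit Arguments.
Unset Strict Implicit.
Unset Printing Implicit Defensive.

Section Game.
Variables (T : finType) (e : rel T).

Section NestedInduction.
Variables (oracle : bool) (q : nat) (P : {set T} -> nat -> Prop).
Hypotheses
  (P_done : forall (F : {set T}) t, F = setT -> P F t)
  (P_token : forall (F : {set T}) t v, v \notin F -> P (v |: F) t -> P F t.+1)
  (P_fill : forall (F : {set T}) t u v,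
     fill_step e setT F u v -> P (v |: F) t -> P F t)
  (P_oracle : forall F t (S : {set {set T}}), oracle ->
     (forall U, U \in S -> is_component e F U) -> q.+1 <= #|S| ->
     (forall S' : {set {set T}}, S' \subset S -> S' != set0 ->
        exists u v,
          fill_step e (F :|: \bigcup_(U in S') U) F u v /\ P (v |: F) t) ->
     P F t).

(* The generated induction principle gives no hypothesis for the oracle
   move, whose continuations sit under an existential. *)
Fixpoint zq_win_nested_ind F t (w : zq_win e oracle q F t) {struct w} : P F t :=
  match w in zq_win _ _ _ F t return P F t with
  | zq_done F t E => P_done t E
  | zq_token F t v vF w' => P_token vF (zq_win_nested_ind w')
  | zq_fill F t u v uv w' => P_fill uv (zq_win_nested_ind w')
  | zq_oracle F t SS o cS cardS next => P_oracle o cS cardS (fun S' sub nz =>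
      match next S' sub nz with
      | ex_intro u (ex_intro v (conj uv w')) =>
          ex_intro _ u (ex_intro _ v (conj uv (zq_win_nested_ind w')))
      end)
  end.

End NestedInduction.

Lemma zq_win_tokens oracle q (A F : {set T}) t :
  [disjoint A & F] -> zq_win e oracle q (F :|: A) t ->
  zq_win e oracle q F (t + #|A|).
Proof.
move cardA: #|A| => n; elim: n A F cardA => [|n IH] A F cardA disAF win.
  by move/eqP: cardA; rewrite cards_eq0 => /eqP A0; rewrite A0 setU0 addn0 in win *.
have [x xA] : exists x, x \in A by apply/card_gt0P; rewrite cardA.
rewrite addnS; apply: (zq_token (negbT (disjointFr disAF xA))); apply: (IH (A :\ x)).
- by have := cardsD1 x A; rewrite xA cardA add1n => -[].
- apply/pred0P => y /=; rewrite !inE; case: eqVneq => //= _.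
  by case yA: (y \in A); rewrite ?(disjointFr disAF yA).
- by rewrite -setUA setUCA setD1K.
Qed.

Lemma zq_win_force oracle q (P F : {set T}) t :
  zq_win e oracle q P t -> F \subset P ->
  (forall F' : {set T}, F \subset F' -> F' \proper P ->
     exists u v, fill_step e setT F' u v /\ v \in P) ->
  zq_win e oracle q F t.
Proof.
move=> winP; move cardPF: #|P :\: F| => n.
elim: n F cardPF => [|n IH] F cardPF FP progress.
  suff -> : F = P by [].
  by apply/eqP; rewrite eqEsubset FP -setD_eq0 -cards_eq0 cardPF.
have FP' : F \proper P.
  by rewrite properEneq FP andbT; apply/eqP => EF; rewrite EF setDv cards0 in cardPF.
have [u [v [uv vP]]] := progress F (subxx F) FP'.
have vF : v \notin F by case: uv.
apply: (zq_fill uv); apply: IH.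
- have := cardsD1 v (P :\: F); rewrite cardPF !inE vF vP add1n setDDl setUC.
  by move=> -[].
- by rewrite subUset sub1set vP.
- move=> F' vFF' F'P; apply: progress F'P.
  by apply: subset_trans vFF'; apply: subsetUr.
Qed.

Lemma zq_win_set0 oracle q (x : T) t : zq_win e oracle q set0 t -> 0 < t.
Proof.
move E: set0 => F w.
case: w E => [F' t' -> |F' t' v _ _|F' t' u v [uF _ _ _ _] _|F' t' S _ _ cardS next] E //.
- by move/setP/(_ x): E; rewrite !inE.
- by rewrite -E inE in uF.
- have nz : S != set0 by rewrite -card_gt0; apply: leq_trans cardS.
  by have [u [v [[]]]] := next S (subxx S) nz; rewrite -E inE.
Qed.

Lemma connect_isolated (F : {set T}) z y :
  (forall w, e z w -> w \in F) -> connect (unfilled_rel e F) z y = (y == z).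
Proof.
move=> zF; apply/idP/eqP => [|->]; last exact: connect0.
case/connectP => -[|w p] /= path_p -> //.
by case/andP: path_p => /and3P [/zF ->].
Qed.

Section Components.
Hypothesis e_sym : symmetric e.

Lemma unfilled_rel_sym F : symmetric (unfilled_rel e F).
Proof. by move=> x y; rewrite /unfilled_rel /= e_sym [(x \notin F) && _]andbC. Qed.

Lemma component_connect F U x : is_component e F U -> x \in U ->
  U = [set y | connect (unfilled_rel e F) x y].
Proof.
case=> x0 _ ->; rewrite inE => x0x; apply/setP => y; rewrite !inE.
by rewrite (same_connect (sym_connect_sym (@unfilled_rel_sym F)) x0x).
Qed.

Lemma component_eq F U1 U2 x : is_component e F U1 -> is_component e F U2 ->
  x \in U1 -> x \in U2 -> U1 = U2.
Proof.
move=> cU1 cU2 xU1 xU2.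
by rewrite (component_connect cU1 xU1) (component_connect cU2 xU2).
Qed.

Lemma component_isolated F U z : is_component e F U ->
  (forall w, e z w -> w \in F) -> z \in U -> U = [set z].
Proof.
move=> cU zF zU; rewrite (component_connect cU zU).
by apply/setP => y; rewrite !inE connect_isolated.
Qed.

End Components.
End Game.

Section StarTree.
Variable k : nat.
Local Notation V := (star_vertex k).
Local Notation e := (star_tree k).

Definition hub : V := None.
Definition centre i : V := Some (i, ord0).
Definition leaf i (b : bool) : V :=
  Some (i, if b then Ordinal (isT : 2 < 3) else Ordinal (isT : 1 < 3)).

Variant star_vertex_spec : V -> Type :=
  | HubVertex : star_vertex_spec hub
  | CentreVertex i : star_vertex_spec (centre i)
  | LeafVertex i b : star_vertex_spec (leaf i b).

Lemma star_vertexP x : star_vertex_spec x.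
Proof.
case: x => [[i [[|[|[|j]]] lt_j3]]|] //; last exact: HubVertex.
- by rewrite (_ : Ordinal lt_j3 = ord0); [exact: CentreVertex | apply: val_inj].
- rewrite (_ : Ordinal lt_j3 = Ordinal (isT : 1 < 3)); last exact: val_inj.
  exact: (LeafVertex i false).
- rewrite (_ : Ordinal lt_j3 = Ordinal (isT : 2 < 3)); last exact: val_inj.
  exact: (LeafVertex i true).
Qed.

Lemma centre_inj : injective centre.
Proof. by move=> i j [->]. Qed.

Lemma leaf_inj i j b c : leaf i b = leaf j c -> i = j /\ b = c.
Proof. by case=> -> /(congr1 val); case: b; case: c. Qed.

Lemma centre_neq_leaf i j b : centre i <> leaf j b.
Proof. by case: b => -[]. Qed.

Lemma star_tree_sym : symmetric e.
Proof.
move=> [[i [[|[|[|?]]] ?]]|] [[j [[|[|[|?]]] ?]]|] //=.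
all: by rewrite ?andbF ?andbT // eq_sym.
Qed.

Lemma adj_hub_centre i : e hub (centre i).
Proof. by []. Qed.

Lemma adj_centre_hub i : e (centre i) hub.
Proof. by []. Qed.

Lemma adj_centre_leaf i b : e (centre i) (leaf i b).
Proof. by rewrite /= eqxx; case: b. Qed.

Lemma hub_nbr y : e hub y -> exists i, y = centre i.
Proof. by case: y / star_vertexP => [|i|i []] //; exists i. Qed.

Lemma centre_nbr i y : e (centre i) y -> y = hub \/ exists b, y = leaf i b.
Proof.
case: y / star_vertexP => [|j|j b] /=; [by left | by rewrite andbF |].
by case: b; rewrite andbT => /eqP <-; right; eexists.
Qed.

Lemma leaf_nbr i b y : e (leaf i b) y -> y = centre i.
Proof.
by case: b; case: y / star_vertexP => [|j|j []] //=; rewrite ?andbT ?andbF // => /eqP <-.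
Qed.

Definition star_open (F : {set V}) i := [forall b, leaf i b \notin F].
Definition n_open (F : {set V}) := #|[set i | star_open F i]|.

Lemma star_openU1 F v i : star_open (v |: F) i -> star_open F i.
Proof.
move=> /forallP open_i; apply/forallP => b.
by move: (open_i b); rewrite in_setU1 negb_or => /andP [].
Qed.

Lemma n_open_le F : n_open F <= k.+1.
Proof. by apply: leq_trans (max_card _) _; rewrite card_ord. Qed.

Lemma n_open_all F : [forall i, star_open F i] -> n_open F = k.+1.
Proof.
move/forallP => all_open; rewrite /n_open -[RHS]card_ord -cardsT.
by apply: eq_card => i; rewrite !inE all_open.
Qed.

Lemma n_open_set0 : n_open set0 = k.+1.
Proof. by apply: n_open_all; apply/forallP => i; apply/forallP => b; rewrite inE. Qed.

Lemma n_open_setT : n_open setT = 0.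
Proof.
apply/eqP; rewrite cards_eq0; apply/eqP/setP => i; rewrite !inE.
by apply/negbTE/forallPn; exists false; rewrite inE.
Qed.

Lemma n_open_setU1 F v :
  (forall i b, v = leaf i b -> ~~ star_open F i) -> n_open F <= n_open (v |: F).
Proof.
move=> v_closed; apply: subset_leq_card; apply/subsetP => i; rewrite !inE => open_i.
apply/forallP => b; rewrite in_setU1 (negbTE (forallP open_i b)) orbF.
by apply/eqP => /esym /v_closed; rewrite open_i.
Qed.

Lemma n_open_token F v : n_open F <= (n_open (v |: F)).+1.
Proof.
case: v / star_vertexP => [|j|j c].
- by apply: leq_trans (n_open_setU1 _) (leqnSn _).
- by apply: leq_trans (n_open_setU1 _) (leqnSn _) => i b /centre_neq_leaf.
have sub : [set i | star_open F i] \subset j |: [set i | star_open (leaf j c |: F) i].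
  apply/subsetP => i; rewrite !inE => open_i; case: eqVneq => //= ij.
  apply/forallP => b; rewrite in_setU1 (negbTE (forallP open_i b)) orbF.
  by apply/eqP => /leaf_inj [ij' _]; rewrite ij' eqxx in ij.
by apply: leq_trans (subset_leq_card sub) _; rewrite cardsU1; case: (_ \notin _).
Qed.

Lemma fill_leaf H F u i b : fill_step e H F u (leaf i b) ->
  [/\ centre i \in F, hub \in H -> hub \in F
    & leaf i (~~ b) \in H -> leaf i (~~ b) \in F].
Proof.
case=> uF _ _ adj only; rewrite star_tree_sym in adj.
move/leaf_nbr: adj => ui; subst u.
split=> // xH; apply: contraT => xF.
- by have := only _ xH (adj_centre_hub i) xF.
- by have /leaf_inj [_] := only _ xH (adj_centre_leaf i (~~ b)) xF; case: (b).
Qed.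

Lemma fill_hub H F u : fill_step e H F u hub ->
  exists2 i, centre i \in F & forall b, leaf i b \in H -> leaf i b \in F.
Proof.
case=> uF _ _ adj only; rewrite star_tree_sym in adj; have [i ui] := hub_nbr adj.
subst u; exists i => // b lH; apply: contraT => lF.
by have := only _ lH (adj_centre_leaf i b) lF.
Qed.

Lemma fill_centre H F u i : fill_step e H F u (centre i) ->
  (exists b, leaf i b \in F) \/
  (hub \in F /\ forall j, centre j \in H -> centre j \notin F -> j = i).
Proof.
case=> uF _ _ adj only; rewrite star_tree_sym in adj.
case: (centre_nbr adj) => [ui|[b ui]]; subst u; last by left; exists b.
by right; split=> // j cH cF; apply: centre_inj; apply: only cH (adj_hub_centre j) cF.
Qed.

Definition hub_blocked (F : {set V}) :=
  (hub \notin F) && [forall i, [exists b, leaf i b \notin F]].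

Lemma hub_blocked_set0 : hub_blocked set0.
Proof.
by rewrite /hub_blocked inE; apply/forallP => i; apply/existsP; exists true; rewrite inE.
Qed.

Lemma hub_blocked_setU1 F v : hub_blocked F -> ~~ hub_blocked (v |: F) ->
  v = hub \/ exists i b, v = leaf i b /\ leaf i (~~ b) \in F.
Proof.
case/andP=> hF /forallP half_open.
rewrite /hub_blocked in_setU1 (negbTE hF) orbF negb_and negbK.
case/orP=> [/eqP ->|/forallPn [i /existsPn full_i]]; first by left.
right; have /existsP [b lF] := half_open i.
have := negbNE (full_i b); rewrite in_setU1 (negbTE lF) orbF => /eqP vE.
exists i, b; split=> //; have := negbNE (full_i (~~ b)); rewrite in_setU1 -vE.
by case/orP=> // /eqP /leaf_inj [_]; case: (b).
Qed.

Lemma hub_blocked_token F v :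
  n_open F + hub_blocked F <= n_open (v |: F) + hub_blocked (v |: F) + 1.
Proof.
have := n_open_token F v.
case: (boolP (hub_blocked F)) => [bF|_] /=; last by case: (hub_blocked _) => /=; lia.
case: (boolP (hub_blocked (v |: F))) => [_|nbF] /=; first by lia.
suff: n_open F <= n_open (v |: F) by lia.
apply: n_open_setU1 => i b vE; subst v.
case: (hub_blocked_setU1 bF nbF) => [//|[j [c [/leaf_inj [<- _] lF]]]].
by apply/forallPn; exists (~~ c); rewrite negbK.
Qed.

Lemma hub_blocked_fill F u v : fill_step e setT F u v ->
  n_open F + hub_blocked F <= n_open (v |: F) + hub_blocked (v |: F).
Proof.
move=> uv; have mono : n_open F <= n_open (v |: F).
  apply: n_open_setU1 => i b vE; subst v.
  have [_ _ /(_ (in_setT _)) lF] := fill_leaf uv.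
  by apply/forallPn; exists (~~ b); rewrite negbK.
case: (boolP (hub_blocked F)) => [bF|_] /=; last by lia.
case: (boolP (hub_blocked (v |: F))) => [_|nbF] /=; first by lia.
exfalso; move: (bF) => /andP [hF /forallP half_open].
case: (hub_blocked_setU1 bF nbF) => [vE|[i [b [vE _]]]]; subst v.
- have [i _ full] := fill_hub uv; have /existsP [b] := half_open i.
  by rewrite full ?in_setT.
- by have [_ /(_ (in_setT _))] := fill_leaf uv; rewrite (negbTE hF).
Qed.

Lemma Z_game_ge q F t : zq_win e false q F t -> n_open F + hub_blocked F <= t.
Proof.
elim/zq_win_nested_ind: F t / => [F t ->|F t v _|F t u v /hub_blocked_fill|//].
- by rewrite n_open_setT /hub_blocked in_setT.
- by have := hub_blocked_token F v; lia.
- by lia.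
Qed.

Definition primed (F : {set V}) :=
  [forall i, star_open F i] && [exists i, centre i \in F].
Definition hub_only (F : {set V}) := (hub \in F) && [forall i, centre i \notin F].

Lemma primed_set0 : primed set0 = false.
Proof.
by apply/negbTE; rewrite negb_and; apply/orP; right; apply/existsPn => i; rewrite inE.
Qed.

(* H is safe for F when forcing inside H cannot close an open star (a filled
   centre never sees exactly one of its two unfilled outer leaves) nor make F
   primed (the hub never sees exactly one unfilled centre). *)
Definition fill_safe (F H : {set V}) :=
  (forall i b, centre i \in F -> star_open F i ->
     leaf i b \in H -> leaf i (~~ b) \in H) /\
  (hub_only F -> forall i, centre i \in H -> exists2 j, j != i & centre j \in H).

Lemma potential_token F v :
  n_open F + primed (v |: F) <= n_open (v |: F) + primed F + 1.
Proof.
have := n_open_token F v; have := n_open_le F.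
case: (boolP (primed (v |: F))) => [/andP [/n_open_all -> _]|_] /=.
all: by case: (primed F) => /=; lia.
Qed.

Lemma potential_primed F v : primed F ->
  n_open F + primed (v |: F) <= n_open (v |: F) + primed F.
Proof.
move=> primedF; rewrite primedF; have := n_open_token F v.
case/andP: primedF => /n_open_all -> _; have := n_open_le (v |: F).
by case: (boolP (primed (v |: F))) => [/andP [/n_open_all -> _]|_] /=; lia.
Qed.

Lemma potential_fill_safe H F u v : fill_safe F H -> fill_step e H F u v ->
  n_open F + primed (v |: F) <= n_open (v |: F) + primed F.
Proof.
move=> [safe_leaves safe_centres] uv; have vH : v \in H by case: uv.
case: (boolP (primed F)) => [primedF|unprimed].
  by have := potential_primed v primedF; rewrite primedF.
case: (boolP (primed (v |: F))) => [/andP [/forallP open_vF /existsP [j cj]]|_].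
  have all_open i : star_open F i := star_openU1 (open_vF i).
  have no_centre i : centre i \notin F.
    apply: contra unprimed => ci.
    by apply/andP; split; [apply/forallP | apply/existsP; exists i].
  move: cj; rewrite in_setU1 (negbTE (no_centre j)) orbF => /eqP vj; subst v.
  case: (fill_centre uv) => [[b lF]|[hF only]].
    by move/forallP: (all_open j) => /(_ b); rewrite lF.
  have hub_onlyF : hub_only F by apply/andP; split; last exact/forallP.
  have [j' nj cj'] := safe_centres hub_onlyF j vH.
  by rewrite (only j' cj' (no_centre j')) eqxx in nj.
rewrite !addn0; apply: n_open_setU1 => i b vE; subst v; apply/negP => open_i.
have [ci _ opp] := fill_leaf uv.
have /opp := safe_leaves i b ci open_i vH.
by move/forallP: open_i => /(_ (~~ b)) /negP.
Qed.

Definition seeded (F : {set V}) i := (centre i \in F) && star_open F i.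
Definition risky (F U : {set V}) :=
  [exists i, seeded F i && [exists b, leaf i b \in U]]
  || hub_only F && [exists i, centre i \in U].

Lemma seeded_leaf_component F U i b : seeded F i -> is_component e F U ->
  leaf i b \in U -> U = [set leaf i b].
Proof.
case/andP=> ci _ cU lU.
by apply: (component_isolated star_tree_sym cU _ lU) => w /leaf_nbr ->.
Qed.

Lemma safe_unrisky F U : ~~ risky F U -> fill_safe F (F :|: U).
Proof.
case/norP=> no_leaf no_centre; split.
- move=> i b ci open_i; rewrite in_setU (negbTE (forallP open_i b)) /= => lU.
  case/negP: no_leaf; apply/existsP; exists i.
  by rewrite /seeded ci open_i; apply/existsP; exists b.
- move=> ho i; move: (ho) no_centre => /andP [_ /forallP nc].
  by rewrite ho in_setU (negbTE (nc i)) /= => /existsPn /(_ i) /negbTE ->.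
Qed.

Lemma safe_leaf_pair (F : {set V}) i : centre i \in F ->
  fill_safe F (F :|: ([set leaf i false] :|: [set leaf i true])).
Proof.
move=> ci; split=> [j b _ open_j|/andP [_ /forallP /(_ i)]]; last by rewrite ci.
rewrite !in_setU !in_set1 (negbTE (forallP open_j b)) /=.
by case/orP=> /eqP /leaf_inj [-> _]; case: (~~ b); rewrite !eqxx ?orbT.
Qed.

Lemma safe_two_centres F U1 U2 i1 i2 : hub_only F ->
  is_component e F U1 -> is_component e F U2 -> U1 != U2 ->
  centre i1 \in U1 -> centre i2 \in U2 -> fill_safe F (F :|: (U1 :|: U2)).
Proof.
move=> ho cU1 cU2 U12 c1 c2; move: (ho) => /andP [_ /forallP no_centre].
split=> [i b ci|_ i]; first by rewrite (negbTE (no_centre i)) in ci.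
rewrite !in_setU (negbTE (no_centre i)) /= => /orP [cU|cU].
- exists i2; last by rewrite !inE c2 !orbT.
  apply: contraNneq U12 => i2i; apply/eqP.
  by apply: (component_eq star_tree_sym cU1 cU2 cU); rewrite -i2i.
- exists i1; last by rewrite !inE c1 !orbT.
  apply: contraNneq U12 => i1i; apply/eqP.
  by apply: (component_eq star_tree_sym cU1 cU2 (x := centre i)); rewrite // -i1i.
Qed.

Lemma primed_of_risky F (S : {set {set V}}) :
  (forall U, U \in S -> is_component e F U) -> k.+1 <= #|S| ->
  (forall U, U \in S -> risky F U) -> ~~ hub_only F ->
  (forall i U1 U2, seeded F i -> U1 \in S -> U2 \in S ->
     leaf i false \in U1 -> leaf i true \in U2 -> False) ->
  primed F.
Proof.
move=> cS cardS riskyS nho no_split.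
pose arm (U : {set V}) :=
  odflt ord0 [pick i | seeded F i && [exists b, leaf i b \in U]].
have armP U : U \in S -> seeded F (arm U) && [exists b, leaf (arm U) b \in U].
  move/riskyS; rewrite /risky (negbTE nho) orbF /arm => /existsP [i iU].
  by case: pickP => [j ->|/(_ i)]; rewrite ?iU.
have arm_inj : {in S &, injective arm}.
  move=> U1 U2 U1S U2S E; case/andP: (armP _ U1S) => si /existsP [b l1].
  case/andP: (armP _ U2S) => _ /existsP [c]; rewrite -E => l2.
  have [bc|] := eqVneq b c.
    subst c; rewrite (seeded_leaf_component si (cS _ U1S) l1).
    by rewrite (seeded_leaf_component si (cS _ U2S) l2).
  case: b c l1 l2 => -[] // l1 l2 _; exfalso.
  - exact: (no_split _ _ _ si U2S U1S l2 l1).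
  - exact: (no_split _ _ _ si U1S U2S l1 l2).
have all_seeded i : seeded F i.
  suff /imsetP [U US ->] : i \in arm @: S by case/andP: (armP _ US).
  suff -> : arm @: S = setT by [].
  by apply/eqP; rewrite eqEcard subsetT cardsT card_ord card_in_imset.
apply/andP; split; first by apply/forallP => i; case/andP: (all_seeded i).
by apply/existsP; exists ord0; case/andP: (all_seeded ord0).
Qed.

Lemma oracle_safe_choice F (S : {set {set V}}) : 0 < k -> ~~ primed F ->
  (forall U, U \in S -> is_component e F U) -> k.+1 <= #|S| ->
  exists S' : {set {set V}},
    [/\ S' \subset S, S' != set0 & fill_safe F (F :|: \bigcup_(U in S') U)].
Proof.
move=> k_gt0 unprimed cS cardS.
have pair U1 U2 :
    U1 \in S -> U2 \in S -> [set U1; U2] \subset S /\ [set U1; U2] != set0.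
  move=> U1S U2S; split; first by apply/subsetP => U /set2P [] ->.
  by apply/set0Pn; exists U1; rewrite set21.
have big_pair (U1 U2 : {set V}) : \bigcup_(U in [set U1; U2]) U = U1 :|: U2.
  by rewrite bigcup_setU !big_set1.
have [/exists_inP [U US safeU]|/exists_inPn riskyS] := boolP [exists U in S, ~~ risky F U].
  exists [set U]; split; [by rewrite sub1set | by apply/set0Pn; exists U; rewrite set11 |].
  by rewrite big_set1; apply: safe_unrisky.
have [|no_split] := boolP [exists i, [exists U1 in S, [exists U2 in S,
    [&& seeded F i, leaf i false \in U1 & leaf i true \in U2]]]].
  case/existsP=> i /exists_inP [U1 U1S /exists_inP [U2 U2S /and3P [si l1 l2]]].
  have [sub nz] := pair _ _ U1S U2S; exists [set U1; U2]; split=> //.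
  rewrite big_pair (seeded_leaf_component si (cS _ U1S) l1).
  rewrite (seeded_leaf_component si (cS _ U2S) l2).
  by apply: safe_leaf_pair; case/andP: si.
have [ho|nho] := boolP (hub_only F); last first.
  case/negP: unprimed.
  apply: (primed_of_risky cS cardS (fun U US => negbNE (riskyS U US)) nho).
  move=> i U1 U2 si U1S U2S l1 l2; case/existsP: no_split; exists i.
  by apply/exists_inP; exists U1 => //; apply/exists_inP; exists U2 => //; apply/and3P.
have centre_in U : U \in S -> exists i, centre i \in U.
  move=> /riskyS /negbNE; rewrite /risky ho /= => /orP [|/existsP //].
  case/existsP=> i /andP [/andP [ci _] _].
  by move: ho => /andP [_ /forallP /(_ i)]; rewrite ci.
have /card_gt1P [U1 [U2 [U1S U2S U12]]] : 1 < #|S| by apply: leq_trans cardS.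
have [[i1 c1] [i2 c2]] := (centre_in _ U1S, centre_in _ U2S).
have [sub nz] := pair _ _ U1S U2S; exists [set U1; U2]; split=> //.
by rewrite big_pair; apply: (safe_two_centres ho (cS _ U1S) (cS _ U2S) U12 c1 c2).
Qed.

Lemma fill_safe_setT F : 0 < k -> fill_safe F setT.
Proof.
move=> k_gt0; split=> [*|_ i _]; first by rewrite in_setT.
have /card_gt0P [j] : 0 < #|[set~ i]| by rewrite cardsC1 card_ord.
by rewrite !inE => ji; exists j; rewrite ?in_setT.
Qed.

Lemma Zk_game_ge F t : 0 < k -> zq_win e true k F t -> n_open F <= t + primed F.
Proof.
move=> k_gt0.
elim/zq_win_nested_ind: F t / => [F t ->|F t v _|F t u v uv|F t S _ cS cardS next].
- by rewrite n_open_setT.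
- by have := potential_token F v; lia.
- by have := potential_fill_safe (fill_safe_setT F k_gt0) uv; lia.
have [primedF|unprimed] := boolP (primed F).
  have nz : S != set0 by rewrite -card_gt0; apply: leq_trans cardS.
  have [u [v [_ IH]]] := next S (subxx S) nz.
  by have := potential_primed v primedF; rewrite primedF; lia.
have [S' [sub nz safe]] := oracle_safe_choice k_gt0 unprimed cS cardS.
have [u [v [uv IH]]] := next S' sub nz.
by have := potential_fill_safe safe uv; lia.
Qed.

Lemma fill_progress (F : {set V}) i0 : (forall i, leaf i false \in F) ->
  leaf i0 true \in F -> F \proper setT -> exists u v, fill_step e setT F u v.
Proof.
move=> l1F l0F /properP [_ [x _ xF]].
have [/existsP [i ciF]|/existsPn all_c] := boolP [exists i, centre i \notin F].
  exists (leaf i false), (centre i); split; rewrite ?in_setT //.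
  - by rewrite star_tree_sym adj_centre_leaf.
  - by move=> w _ /leaf_nbr.
have cF i : centre i \in F := negbNE (all_c i).
have [hF|hF] := boolP (hub \in F).
  case: x / star_vertexP xF => [|i|i []] xF; rewrite ?hF ?cF ?l1F // in xF.
  exists (centre i), (leaf i true); split; rewrite ?in_setT ?adj_centre_leaf //.
  by move=> w _ /centre_nbr [->|[[] ->]]; rewrite ?hF ?l1F.
exists (centre i0), hub; split; rewrite ?in_setT //.
by move=> w _ /centre_nbr [->|[[] ->]]; rewrite ?l0F ?l1F.
Qed.

Lemma zq_win_of_leaves oracle q (F : {set V}) i0 : (forall i, leaf i false \in F) ->
  leaf i0 true \in F -> zq_win e oracle q F 0.
Proof.
move=> l1F l0F.
apply: (zq_win_force (zq_done e oracle q 0 (erefl setT)) (subsetT F)) => F' FF' F'T.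
have l1F' i : leaf i false \in F' := subsetP FF' _ (l1F i).
have [u [v uv]] := fill_progress l1F' (subsetP FF' _ l0F) F'T.
by exists u, v; rewrite in_setT.
Qed.

Definition first_leaves : {set V} := [set leaf i false | i : 'I_k.+1].

Lemma first_leavesP i : leaf i false \in first_leaves.
Proof. exact: imset_f. Qed.

Lemma card_first_leaves : #|first_leaves| = k.+1.
Proof. by rewrite card_imset ?card_ord // => i j /leaf_inj []. Qed.

Lemma Z_game_win q : zq_win e false q set0 (k + 2).
Proof.
have l0 : leaf ord0 true \notin first_leaves by apply/imsetP => -[i _ /leaf_inj []].
have <- : #|leaf ord0 true |: first_leaves| = k + 2.
  by rewrite cardsU1 l0 card_first_leaves add1n addn2.
rewrite -[#|_|]add0n; apply: zq_win_tokens.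
  by apply/pred0P => x; rewrite /= in_set0 andbF.
rewrite set0U; apply: (@zq_win_of_leaves _ _ _ ord0) => [i|]; rewrite in_setU1.
- by rewrite first_leavesP orbT.
- by rewrite eqxx.
Qed.

Definition seeds : {set V} := first_leaves :|: [set centre i | i : 'I_k.+1].

Lemma zq_win_seeds : zq_win e true k seeds 0.
Proof.
have centre_seeds i : centre i \in seeds by rewrite in_setU orbC imset_f.
have hub_seeds : hub \notin seeds by rewrite in_setU; apply/norP; split; apply/imsetP => -[].
have leaf_seeds i : leaf i true \notin seeds.
  rewrite in_setU; apply/norP; split; apply/imsetP => -[j _].
  - by move/leaf_inj => [].
  - by move/esym/centre_neq_leaf.
apply: (zq_oracle (S := [set [set leaf i true] | i : 'I_k.+1])) => //.
- move=> U /imsetP [i _ ->]; exists (leaf i true) => //.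
  by apply/setP => y; rewrite !inE connect_isolated // => w /leaf_nbr ->.
- by rewrite card_imset ?card_ord // => i j /set1_inj /leaf_inj [].
move=> S' sub /set0Pn [U US']; have [i _ UE] := imsetP (subsetP sub _ US').
have lH : leaf i true \in seeds :|: \bigcup_(U in S') U.
  by rewrite in_setU orbC; apply/orP; left; apply/bigcupP; exists U; rewrite // UE set11.
exists (centre i), (leaf i true); split.
- split=> //; first exact: adj_centre_leaf.
  move=> w wH /centre_nbr [wE|[[] wE]] wF; subst w => //.
  + case/setUP: wH => [|/bigcupP [U' /(subsetP sub) /imsetP [j _ ->]]]; last by rewrite inE.
    by rewrite (negbTE hub_seeds).
  + by rewrite in_setU first_leavesP in wF.
apply: (@zq_win_of_leaves _ _ _ i) => [j|]; rewrite in_setU1.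
- by rewrite in_setU first_leavesP !orbT.
- by rewrite eqxx.
Qed.

Lemma Zk_game_win : zq_win e true k set0 (k + 1).
Proof.
rewrite addn1 -card_first_leaves -[#|_|]add0n; apply: zq_win_tokens.
  by apply/pred0P => x; rewrite /= in_set0 andbF.
rewrite set0U; apply: (zq_win_force zq_win_seeds (subsetUl _ _)).
move=> F' sub /properP [_ [x xS xF']].
have l1F' i : leaf i false \in F' := subsetP sub _ (first_leavesP i).
case/setUP: xS xF' => /imsetP [i _ ->] xF'; first by rewrite l1F' in xF'.
exists (leaf i false), (centre i); split; last by rewrite in_setU orbC imset_f.
split; rewrite ?in_setT //.
- by rewrite star_tree_sym adj_centre_leaf.
- by move=> w _ /leaf_nbr.
Qed.

End StarTree.

Theorem proposition2p4 (k : nat) :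
  #|star_vertex k| = 3 * k + 4 /\
  is_Z (star_tree k) (k + 2) /\ is_Zq (star_tree k) k (k + 1).
Proof.
split; first by rewrite card_option card_prod !card_ord; lia.
split; split.
- exact: Z_game_win.
- by move=> t /Z_game_ge; rewrite n_open_set0 hub_blocked_set0 addn1 addn2.
- exact: Zk_game_win.
move=> t win; have [k0|k_gt0] := posnP k.
  by move: win; rewrite k0 => /(zq_win_set0 (hub 0)).
by have := Zk_game_ge k_gt0 win; rewrite n_open_set0 primed_set0 addn0 addn1.
Qed.
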